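(* Let $C$ be a finite-dimensional graded vector space with an $A_\infty$ coalgebra structure $\{\triangle_n\}$ and a nondegenerate symmetric bilinear form $\langle-,-\rangle$ of degree $-d$, and let $A=C^*=\mathrm{Hom}_k(C,k)$ with the dual $A_\infty$ algebra structure $\{\mu_n\}$ and the form transported along the isomorphism $C\to A$, $a\mapsto a^*=\langle-,a\rangle$. Then $C$ is a cyclic $A_\infty$ coalgebra if and only if $A$ is a cyclic $A_\infty$ algebra.
   Context: An $A_\infty$ coalgebra structure on a graded vector space $C$ is a sequence $\triangle_n:C\to C^{\otimes n}$ of degree $n-2$ with $\sum_{r+s+t=n}(-1)^{r+st}(\mathrm{id}^{\otimes r}\otimes\triangle_s\otimes\mathrm{id}^{\otimes t})\triangle_{r+1+t}=0$; an $A_\infty$ algebra structure on $A$ is $\mu_n:A^{\otimes n}\to A$ of degree $n-2$ with $\sum_{r+s+t=n}(-1)^{r+st}\mu_{r+1+t}(\mathrm{id}^{\otimes r}\otimes\mu_s\otimes\mathrm{id}^{\otimes t})=0$; the dual structure is $\mu_r(x_1,\dots,x_r)(a)=(x_1,\dots,x_r)(\triangle_r(a))$. A symmetric bilinear form of degree $-d$ is $\langle-,-\rangle:V\otimes V\to k[d]$ with $\langle v,w\rangle=(-1)^{|v||w|}\langle w,v\rangle$. $C$ is cyclic (of degree $-d$) if for all $a,b\in C$ and all $r$, writing $\triangle_r(a)=a^1\cdots a^r$, $\triangle_r(b)=b^1\cdots b^r$: $\langle a,b^1\rangle\, b^2\cdots b^r=(-1)^{r+|b^1|(|a|+r)}\langle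 b,a^r\rangle\, a^1\cdots a^{r-1}\in C^{\otimes(r-1)}$. $A$ is cyclic if $\langle\mu_n(a_1,\dots,a_n),a_{n+1}\rangle=(-1)^{n+|a_{n+1}|(|a_1|+\cdots+|a_n|)}\langle\mu_n(a_{n+1},a_1,\dots,a_{n-1}),a_n\rangle$ for all $n$ and all $a_i$. *)

(* Finite-dimensional graded vector spaces are modelled in
   coordinates: C = k^n with a homogeneous basis e_0..e_{n-1}, e_i of degree
   deg i. *)
From HB Require Import structures.
From mathcomp Require Import all_boot all_order all_algebra.
Set Implicit Arguments. Unset Strict Implicit. Unset Printing Implicit Defensive.
Import GRing.Theory Num.Theory.
Local Open Scope ring_scope.

Definition ai_sgnz (k : pzRingType) (e : int) : k := (-1) ^+ `|e|%N.

Section Graded.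
Variables (k : fieldType) (n : nat) (deg : 'I_n -> int).

Definition ai_degs (t : seq 'I_n) : int := \sum_(i <- t) deg i.

Definition ai_bvec (j : 'I_n) : 'I_n -> k := fun i => (i == j)%:R.

Definition ai_homC (v : 'I_n -> k) (p : int) : Prop :=
  forall i, v i != 0 -> deg i = p.

(* An element x of A = Hom_k(C,k) is given by its values x i = x(e_i);
   A^p = Hom(C^{-p}, k), so x is homogeneous of degree p iff it only
   pairs nontrivially with basis vectors of degree -p. *)
Definition ai_homA (x : 'I_n -> k) (p : int) : Prop :=
  forall i, x i != 0 -> deg i = - p.

Definition ai_homAs (xs : seq ('I_n -> k)) (ps : seq int) : Prop :=
  size ps = size xs /\
  forall j, (j < size xs)%N -> ai_homA (nth (fun _ => 0) xs j) (nth 0 ps j).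

(* ---------- the coalgebra structure ----------
   D r i t = coefficient of e_{t_1} (x) ... (x) e_{t_r} in triangle_r(e_i)
   (only used for r >= 1 and size t = r). *)
Definition ai_DeltaV (D : nat -> 'I_n -> seq 'I_n -> k) (r : nat)
  (v : 'I_n -> k) (t : seq 'I_n) : k :=
  \sum_(i < n) v i * D r i t.

Definition ai_Delta_degree (D : nat -> 'I_n -> seq 'I_n -> k) : Prop :=
  forall (r : nat) (i : 'I_n) (t : r.-tuple 'I_n), (0 < r)%N ->
    D r i t != 0 -> ai_degs t = deg i + r%:Z - 2.

(* coefficient at e_w of (id^{(x)r} (x) triangle_s (x) id^{(x)t}) triangle_{r+1+t} (e_i),
   with the Koszul sign (-1)^{|triangle_s| (|x_1|+...+|x_r|)}. *)
Definition ai_compo (D : nat -> 'I_n -> seq 'I_n -> k) (r s t : nat)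
  (i : 'I_n) (w : seq 'I_n) : k :=
  \sum_(j < n) D (r + 1 + t)%N i (take r w ++ j :: drop (r + s) w)
      * ai_sgnz k ((s%:Z - 2) * ai_degs (take r w))
      * D s j (take s (drop r w)).

Definition ai_Ainf_coalgebra (D : nat -> 'I_n -> seq 'I_n -> k) : Prop :=
  ai_Delta_degree D /\
  forall (N : nat) (i : 'I_n) (w : N.-tuple 'I_n), (0 < N)%N ->
    \sum_(0 <= r < N) \sum_(1 <= s < (N - r).+1)
       ai_sgnz k ((r + s * (N - r - s))%N%:Z) * ai_compo D r s (N - r - s) i w = 0.

Definition ai_form (G : 'M[k]_n) (v w : 'I_n -> k) : k :=
  \sum_(i < n) \sum_(j < n) v i * G i j * w j.

Definition ai_symmetric_form (G : 'M[k]_n) : Prop :=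
  forall v w p q, ai_homC v p -> ai_homC w q ->
    ai_form G v w = ai_sgnz k (p * q) * ai_form G w v.

Definition ai_form_of_degree (G : 'M[k]_n) (d : int) : Prop :=
  forall v w p q, ai_homC v p -> ai_homC w q -> ai_form G v w != 0 -> p + q = d.

Definition ai_nondegenerate (G : 'M[k]_n) : Prop :=
  forall v, (forall w, ai_form G w v = 0) -> forall i, v i = 0.

Definition ai_star (G : 'M[k]_n) (a : 'I_n -> k) : 'I_n -> k :=
  fun i => ai_form G (ai_bvec i) a.

Definition ai_transported (G : 'M[k]_n) (formA : ('I_n -> k) -> ('I_n -> k) -> k)
  : Prop :=
  forall a b, formA (ai_star G a) (ai_star G b) = ai_form G a b.

Definition ai_mu (D : nat -> 'I_n -> seq 'I_n -> k) (xs : seq ('I_n -> k))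
  : 'I_n -> k :=
  fun i => \sum_(t : (size xs).-tuple 'I_n)
     D (size xs) i t * \prod_(j < size xs) (nth (fun _ => 0) xs j) (tnth t j).

(* <a,b^1> b^2...b^r = (-1)^{r+|b^1|(|a|+r)} <b,a^r> a^1...a^{r-1},
   read summand-wise in the Sweedler sum of triangle_r(b) (the sign is
   attached to the summand carrying b^1 = e_j), evaluated at every basis
   tensor e_u of C^{(x)(r-1)}. *)
Definition ai_cyclic_coalgebra (D : nat -> 'I_n -> seq 'I_n -> k) (G : 'M[k]_n)
  : Prop :=
  forall (r : nat) (a b : 'I_n -> k) (p q : int), (0 < r)%N ->
    ai_homC a p -> ai_homC b q ->
    forall u : (r.-1).-tuple 'I_n,
      \sum_(j < n) ai_sgnz k (r%:Z + deg j * (p + r%:Z)) * ai_form G a (ai_bvec j)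
                     * ai_DeltaV D r b (j :: u)
      = \sum_(j < n) ai_form G b (ai_bvec j) * ai_DeltaV D r a (rcons u j).

(* <mu_N(a_1..a_N), a_{N+1}> =
     (-1)^{N + |a_{N+1}|(|a_1|+...+|a_N|)} <mu_N(a_{N+1},a_1..a_{N-1}), a_N>,
   with xs = [a_1..a_{N-1}], y = a_N, z = a_{N+1}. *)
Definition ai_cyclic_algebra (D : nat -> 'I_n -> seq 'I_n -> k)
  (formA : ('I_n -> k) -> ('I_n -> k) -> k) : Prop :=
  forall (xs : seq ('I_n -> k)) (ps : seq int) (y z : 'I_n -> k) (py pz : int),
    ai_homAs xs ps -> ai_homA y py -> ai_homA z pz ->
    formA (ai_mu D (rcons xs y)) z
    = ai_sgnz k ((size xs).+1%:Z + pz * (\sum_(p <- ps) p + py))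
      * formA (ai_mu D (z :: xs)) y.

End Graded.

From mathcomp Require Import all_boot all_order all_algebra.
From mathcomp Require Import ring zify.
From Stdlib Require Import FunctionalExtensionality.
Set Implicit Arguments. Unset Strict Implicit. Unset Printing Implicit Defensive.
Import GRing.Theory.
Local Open Scope ring_scope.

(* Every element of [A] is some [c^*], and [<x, c^*>] is, up to a sign, the value [x(c)].
   Evaluating both sides of the cyclicity identity of [A] at [b^*, c^*] and at arbitrary
   [x_1, ..., x_{r-1}] therefore gives sums over basis tensors [e_u] of
   [x_1(e_{u_1}) ... x_{r-1}(e_{u_{r-1}})] times the two sides of the cyclicity identity of [C]
   evaluated at [e_u], and the Koszul signs match term by term.  So cyclicity of [C] gives
   cyclicity of [A]; conversely, taking the [x_i] in the dual basis isolates a single [e_u]. *)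

Section Signs.
Variable R : unitRingType.
Local Notation sg := (ai_sgnz R).

Lemma sgnzE (e : int) : sg e = (-1) ^ e.
Proof. by case: e => m; rewrite /ai_sgnz //= -invr_sign. Qed.

Lemma sgnzD a b : sg (a + b) = sg a * sg b.
Proof. by rewrite !sgnzE exprzDr // unitrN1. Qed.

Lemma sgnzK a (x : R) : sg a * (sg a * x) = x.
Proof. by rewrite mulrA /ai_sgnz -exprD addnn -mul2n exprM sqrrN !expr1n mul1r. Qed.

Lemma sgnz_double a : sg (a + a) = 1.
Proof. by rewrite sgnzD; have := sgnzK a 1; rewrite mulr1. Qed.

Lemma sgnz_mul2I a b (x y : R) : sg a * sg b * x = sg a * sg b * y -> x = y.
Proof. by rewrite -!mulrA => /(congr1 (fun z => sg b * (sg a * z))); rewrite !sgnzK. Qed.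

End Signs.

Section TupleSums.
Variables (R : Type) (idx : R) (op : Monoid.com_law idx) (T : finType).

Lemma big_tuple_cons m (F : seq T -> R) :
  \big[op/idx]_(t : m.+1.-tuple T) F t
  = \big[op/idx]_(x : T) \big[op/idx]_(u : m.-tuple T) F (x :: u).
Proof.
rewrite pair_big /=.
have cons_bij : bijective (fun p : T * m.-tuple T => [tuple of p.1 :: p.2]).
  exists (fun t : m.+1.-tuple T => (thead t, [tuple of behead t])).
    by case=> x u /=; congr (_, _); apply: val_inj.
  by move=> t; rewrite [RHS]tuple_eta.
by rewrite (reindex _ (onW_bij _ cons_bij)).
Qed.

Lemma big_tuple_rcons m (F : seq T -> R) :
  \big[op/idx]_(t : m.+1.-tuple T) F t
  = \big[op/idx]_(x : T) \big[op/idx]_(u : m.-tuple T) F (rcons u x).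
Proof.
have rot_bij : bijective (fun t : m.+1.-tuple T => [tuple of rot 1 t]).
  exists (fun t : m.+1.-tuple T => [tuple of rotr 1 t]).
    by move=> t; apply: val_inj; rewrite /= rotK.
  by move=> t; apply: val_inj; rewrite /= rotrK.
rewrite (reindex _ (onW_bij _ rot_bij)) /= (big_tuple_cons m (fun t => F (rot 1 t))).
by apply: eq_bigr => x _; apply: eq_bigr => u _; rewrite rot1_cons.
Qed.

End TupleSums.

Lemma sumr_neq0_exists (V : nmodType) (I : finType) (F : I -> V) :
  \sum_i F i != 0 -> exists i, F i != 0.
Proof.
move=> nz; case: (pickP (fun i => F i != 0)) => [i Fi|F0]; first by exists i.
by move: nz; rewrite big1 ?eqxx // => i _; apply/eqP/negbFE/F0.
Qed.

Section Form.
Variables (k : fieldType) (n : nat) (deg : 'I_n -> int) (G : 'M[k]_n) (d : int).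
Hypotheses (G_sym : ai_symmetric_form deg G) (G_deg : ai_form_of_degree deg G d).
Local Notation sg := (ai_sgnz k).
Local Notation form := (ai_form G).
Local Notation bvec := (@ai_bvec k n).

Lemma form_bvecl i w : form (bvec i) w = \sum_j G i j * w j.
Proof.
rewrite /ai_form (bigD1 i) //= [X in _ + X]big1 ?addr0.
  by apply: eq_bigr => j _; rewrite /ai_bvec eqxx mul1r.
by move=> l li; apply: big1 => j _; rewrite /ai_bvec (negbTE li) !mul0r.
Qed.

Lemma form_bvec i j : form (bvec i) (bvec j) = G i j.
Proof.
rewrite form_bvecl (bigD1 j) //= [X in _ + X]big1 ?addr0.
  by rewrite /ai_bvec eqxx mulr1.
by move=> l lj; rewrite /ai_bvec (negbTE lj) mulr0.
Qed.

Lemma homC_bvec i : ai_homC deg (bvec i) (deg i).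
Proof. by move=> l; rewrite /ai_bvec; case: (l =P i) => [-> | _]; rewrite ?eqxx. Qed.

Lemma starE c i : ai_star G c i = \sum_j G i j * c j.
Proof. exact: form_bvecl. Qed.

Lemma mx_sym i j : G i j = sg (deg i * deg j) * G j i.
Proof. by rewrite -!form_bvec (G_sym (@homC_bvec i) (@homC_bvec j)). Qed.

Lemma mx_deg i j : G i j != 0 -> deg i + deg j = d.
Proof. by rewrite -form_bvec; apply: G_deg; apply: homC_bvec. Qed.

Lemma homA_star c g : ai_homC deg c g -> ai_homA deg (ai_star G c) (g - d).
Proof.
move=> homc i; rewrite starE => /sumr_neq0_exists[j].
rewrite mulf_eq0 negb_or => /andP[/mx_deg <- /homc <-]; ring.
Qed.

Lemma star_bvec b g j : ai_homC deg b g ->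
  ai_star G b j = sg (g * (d - g)) * form b (bvec j).
Proof.
move=> homb; rewrite /ai_star (G_sym (@homC_bvec j) homb).
have [->|nz] := eqVneq (form b (bvec j)) 0; first by rewrite !mulr0.
have degj : deg j = d - g by have := G_deg homb (@homC_bvec j) nz; lia.
by rewrite degj [(d - g) * g]mulrC.
Qed.

End Form.

Section Transport.
Variables (k : fieldType) (n : nat) (deg : 'I_n -> int) (G : 'M[k]_n) (d : int)
  (formA : ('I_n -> k) -> ('I_n -> k) -> k).
Hypotheses (G_sym : ai_symmetric_form deg G) (G_deg : ai_form_of_degree deg G d)
  (G_nd : ai_nondegenerate G) (formA_tr : ai_transported G formA).
Local Notation sg := (ai_sgnz k).

Lemma nondegenerate_unitmx : G \in unitmx.
Proof.
rewrite unitmxE unitfE -det_tr; apply/det0P => -[v v0 vG].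
case/eqP: v0; apply/rowP => j; rewrite mxE.
apply: (G_nd (v := fun i => v 0 i)) => w; rewrite /ai_form big1 // => i _.
have vGi : \sum_l v 0 l * G i l = 0.
  transitivity ((v *m G^T) 0 i); last by rewrite vG mxE.
  by rewrite mxE; apply: eq_bigr => l _; rewrite mxE.
rewrite (eq_bigr (fun l => w i * (v 0 l * G i l))) => [|l _]; last by ring.
by rewrite -mulr_sumr vGi mulr0.
Qed.

Lemma star_surj X : exists a, ai_star G a = X.
Proof.
exists (fun j => (invmx G *m \col_i X i) j 0).
apply: functional_extensionality => i; rewrite starE.
move/matrixP/(_ i 0): (mulKVmx nondegenerate_unitmx (\col_i X i)).
by rewrite !mxE.
Qed.

Lemma star_preimage_hom Z p : ai_homA deg Z p ->
  exists2 c, ai_homC deg c (p + d) & ai_star G c = Z.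
Proof.
have [c <-] := star_surj Z; move=> homZ.
exists (fun i => if deg i == p + d then c i else 0).
  by move=> i /=; case: (deg i =P p + d) => [-> // | _]; rewrite eqxx.
apply: functional_extensionality => i; rewrite !starE.
have [degi|degi] := eqVneq (deg i) (- p).
  apply: eq_bigr => j _; case: eqP => // degj.
  have [->|/(mx_deg G_deg) Gij] := eqVneq (G i j) 0; first by rewrite !mul0r.
  by exfalso; have := Gij; lia.
have : ai_star G c i = 0.
  by apply/eqP; apply: contraTT degi => /homZ ->; rewrite eqxx.
rewrite starE => ->; apply: big1 => j _; case: eqP => [degj|]; last by rewrite mulr0.
have [->|/(mx_deg G_deg) Gij] := eqVneq (G i j) 0; first by rewrite mul0r.
by exfalso; move/eqP: degi; apply; have := Gij; lia.
Qed.

Lemma formA_star X c g : ai_homC deg c g ->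
  formA X (ai_star G c) = sg (g * (d - g)) * \sum_i c i * X i.
Proof.
move=> homc; have [a <-] := star_surj X; rewrite formA_tr /ai_form.
under [in RHS]eq_bigr => i _ do rewrite starE mulr_sumr.
rewrite [in RHS]exchange_big /= mulr_sumr; apply: eq_bigr => i _.
rewrite mulr_sumr; apply: eq_bigr => j _.
have [->|cj] := eqVneq (c j) 0; first by rewrite mulr0 mul0r mulr0.
have [Gji|/(mx_deg G_deg) Gji] := eqVneq (G j i) 0.
  by rewrite (mx_sym G_sym i j) Gji !(mulr0, mul0r).
have degi : deg i = d - g by have := homc j cj; have := Gji; lia.
rewrite (mx_sym G_sym i j) degi (homc j cj) [(d - g) * g]mulrC; ring.
Qed.

End Transport.

Section TensorEval.
Variables (k : fieldType) (n : nat) (deg : 'I_n -> int).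
Local Notation bvec := (@ai_bvec k n).

(* [(x_1 (x) ... (x) x_r)(e_{t_1} (x) ... (x) e_{t_r})]; using [zip] rather than [nth]
   avoids a default index, so that [n = 0] needs no special case. *)
Definition tensor_eval (xs : seq ('I_n -> k)) (t : seq 'I_n) : k :=
  \prod_(xt <- zip xs t) xt.1 xt.2.

Lemma tensor_eval_cons x xs j u :
  tensor_eval (x :: xs) (j :: u) = x j * tensor_eval xs u.
Proof. by rewrite /tensor_eval /= big_cons. Qed.

Lemma tensor_eval_rcons xs x u j : size xs = size u ->
  tensor_eval (rcons xs x) (rcons u j) = tensor_eval xs u * x j.
Proof. by move=> sz; rewrite /tensor_eval zip_rcons // big_rcons. Qed.

Lemma prod_tnth_tensor_eval xs (t : (size xs).-tuple 'I_n) :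
  \prod_(j < size xs) nth (fun _ => 0) xs j (tnth t j) = tensor_eval xs t.
Proof.
elim: xs t => [|x xs IH] t; first by rewrite tuple0 big_ord0 /tensor_eval big_nil.
case/tupleP: t => j u; rewrite big_ord_recl tensor_eval_cons -IH /=.
by congr (_ * _); apply: eq_bigr => l _; rewrite tnthS.
Qed.

Lemma tensor_eval_dual (u v : seq 'I_n) : size v = size u ->
  tensor_eval (map bvec u) v = (v == u)%:R.
Proof.
elim: u v => [|j u IH] [|i v] //=; first by rewrite /tensor_eval big_nil.
by move=> [sz]; rewrite tensor_eval_cons IH // eqseq_cons -mulnb natrM.
Qed.

Lemma sum_tensor_eval_dual m (u : m.-tuple 'I_n) (F : seq 'I_n -> k) :
  \sum_(v : m.-tuple 'I_n) tensor_eval (map bvec u) v * F v = F u.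
Proof.
rewrite (bigD1 u) //= tensor_eval_dual // eqxx mul1r big1 ?addr0 // => v vu.
by rewrite tensor_eval_dual ?size_tuple // val_eqE (negbTE vu) mul0r.
Qed.

Lemma mu_tensor_eval (D : nat -> 'I_n -> seq 'I_n -> k) xs i :
  ai_mu D xs i = \sum_(t : (size xs).-tuple 'I_n) D (size xs) i t * tensor_eval xs t.
Proof. by apply: eq_bigr => t _; rewrite prod_tnth_tensor_eval. Qed.

Lemma mu_rcons D xs y i : ai_mu D (rcons xs y) i =
  \sum_j \sum_(u : (size xs).-tuple 'I_n)
     D (size xs).+1 i (rcons u j) * (tensor_eval xs u * y j).
Proof.
rewrite mu_tensor_eval size_rcons.
rewrite (big_tuple_rcons _ _ (fun t => D (size xs).+1 i t * tensor_eval (rcons xs y) t)).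
by apply: eq_bigr => j _; apply: eq_bigr => u _; rewrite tensor_eval_rcons ?size_tuple.
Qed.

Lemma mu_cons D x xs i : ai_mu D (x :: xs) i =
  \sum_j \sum_(u : (size xs).-tuple 'I_n)
     D (size xs).+1 i (j :: u) * (x j * tensor_eval xs u).
Proof.
rewrite mu_tensor_eval.
rewrite (big_tuple_cons _ _ (fun t => D (size xs).+1 i t * tensor_eval (x :: xs) t)).
by apply: eq_bigr => j _; apply: eq_bigr => u _; rewrite tensor_eval_cons.
Qed.

Lemma homAs_cons (x : 'I_n -> k) xs p ps :
  ai_homAs deg (x :: xs) (p :: ps) <-> ai_homA deg x p /\ ai_homAs deg xs ps.
Proof.
split=> [[/= [sz] homx] | [homx [sz homxs]]].
  by split; [exact: (homx 0%N) | split=> // j; exact: (homx j.+1)].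
by split=> [/=|[|j] /=]; [rewrite sz | | exact: homxs].
Qed.

Lemma homAs_dual u : ai_homAs deg (map bvec u) [seq - deg j | j <- u].
Proof.
elim: u => [|j u IH]; first by split.
apply/homAs_cons; split=> // i; rewrite opprK /ai_bvec.
by case: (i =P j) => [-> // | _]; rewrite eqxx.
Qed.

Lemma degs_cons j u : ai_degs deg (j :: u) = deg j + ai_degs deg u.
Proof. by rewrite /ai_degs big_cons. Qed.

Lemma tensor_eval_homAs xs ps u : ai_homAs deg xs ps -> size u = size xs ->
  tensor_eval xs u != 0 -> \sum_(p <- ps) p = - ai_degs deg u.
Proof.
elim: xs ps u => [|x xs IH] [|p ps] [|j u] //=; try by case.
  by rewrite big_nil /ai_degs big_nil oppr0.
move=> /homAs_cons[homx homxs] [sz].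
rewrite tensor_eval_cons mulf_eq0 negb_or => /andP[/homx degj /(IH _ _ homxs sz)].
by rewrite big_cons degs_cons degj => ->; rewrite opprD opprK.
Qed.

End TensorEval.

Section Cyclic.
Variables (k : fieldType) (n : nat) (deg : 'I_n -> int)
  (D : nat -> 'I_n -> seq 'I_n -> k) (G : 'M[k]_n) (d : int)
  (formA : ('I_n -> k) -> ('I_n -> k) -> k).
Hypotheses (D_deg : ai_Delta_degree deg D)
  (G_sym : ai_symmetric_form deg G) (G_deg : ai_form_of_degree deg G d)
  (G_nd : ai_nondegenerate G) (formA_tr : ai_transported G formA).
Local Notation sg := (ai_sgnz k).
Local Notation form := (ai_form G).
Local Notation bvec := (@ai_bvec k n).

Definition contract_first r a b (u : seq 'I_n) :=
  \sum_j form a (bvec j) * ai_DeltaV D r b (j :: u).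

Definition contract_last r a b (u : seq 'I_n) :=
  \sum_j form b (bvec j) * ai_DeltaV D r a (rcons u j).

Lemma formA_mu_rcons_star xs a b p q : ai_homC deg a p -> ai_homC deg b q ->
  formA (ai_mu D (rcons xs (ai_star G b))) (ai_star G a)
  = sg (p * (d - p)) * sg (q * (d - q)) *
    \sum_(u : (size xs).-tuple 'I_n) tensor_eval xs u * contract_last (size xs).+1 a b u.
Proof.
move=> homa homb; rewrite (formA_star G_sym G_deg G_nd formA_tr _ homa) -mulrA.
congr (_ * _); have -> : \sum_i a i * ai_mu D (rcons xs (ai_star G b)) i =
  \sum_i \sum_j \sum_(u : (size xs).-tuple 'I_n)
     a i * (D (size xs).+1 i (rcons u j) * (tensor_eval xs u * ai_star G b j)).
  by apply: eq_bigr => i _; rewrite mu_rcons mulr_sumr; apply: eq_bigr => j _; rewrite mulr_sumr.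
rewrite exchange_big /=; under eq_bigr => j _ do rewrite exchange_big.
rewrite exchange_big /= mulr_sumr; apply: eq_bigr => u _.
rewrite /contract_last !mulr_sumr; apply: eq_bigr => j _.
rewrite (star_bvec G_sym G_deg _ homb) /ai_DeltaV !mulrA [RHS]mulr_sumr.
by apply: eq_bigr => i _; ring.
Qed.

Lemma formA_mu_cons_star xs a b p q : ai_homC deg a p -> ai_homC deg b q ->
  formA (ai_mu D (ai_star G a :: xs)) (ai_star G b)
  = sg (p * (d - p)) * sg (q * (d - q)) *
    \sum_(u : (size xs).-tuple 'I_n) tensor_eval xs u * contract_first (size xs).+1 a b u.
Proof.
move=> homa homb; rewrite (formA_star G_sym G_deg G_nd formA_tr _ homb).
rewrite [sg (p * _) * _]mulrC -mulrA; congr (_ * _).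
have -> : \sum_i b i * ai_mu D (ai_star G a :: xs) i =
  \sum_i \sum_j \sum_(u : (size xs).-tuple 'I_n)
     b i * (D (size xs).+1 i (j :: u) * (ai_star G a j * tensor_eval xs u)).
  by apply: eq_bigr => i _; rewrite mu_cons mulr_sumr; apply: eq_bigr => j _; rewrite mulr_sumr.
rewrite exchange_big /=; under eq_bigr => j _ do rewrite exchange_big.
rewrite exchange_big /= mulr_sumr; apply: eq_bigr => u _.
rewrite /contract_first !mulr_sumr; apply: eq_bigr => j _.
rewrite (star_bvec G_sym G_deg _ homa) /ai_DeltaV !mulrA [RHS]mulr_sumr.
by apply: eq_bigr => i _; ring.
Qed.

(* On every nonzero summand the degrees of [e_j] and of [u] are forced, and the two
   Koszul signs differ by [sg (2 (p - d))]. *)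
Lemma contract_first_sign m (u : m.-tuple 'I_n) a b p q :
  ai_homC deg a p -> ai_homC deg b q ->
  sg (m.+1%:Z + (p - d) * (- ai_degs deg u + (q - d))) * contract_first m.+1 a b u
  = \sum_j sg (m.+1%:Z + deg j * (p + m.+1%:Z)) * form a (bvec j)
           * ai_DeltaV D m.+1 b (j :: u).
Proof.
move=> homa homb; rewrite /contract_first mulr_sumr; apply: eq_bigr => j _.
have [->|aj] := eqVneq (form a (bvec j)) 0; first by rewrite !(mulr0, mul0r).
have [->|/sumr_neq0_exists[i]] := eqVneq (ai_DeltaV D m.+1 b (j :: u)) 0.
  by rewrite !mulr0.
rewrite mulf_eq0 negb_or => /andP[/homb degi /(@D_deg m.+1 i [tuple of j :: u] (ltn0Sn m))].
rewrite /= degs_cons degi => degu.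
have degj : deg j = d - p by have := G_deg homa (@homC_bvec _ _ deg j) aj; lia.
have -> : m.+1%:Z + (p - d) * (- ai_degs deg u + (q - d))
          = (m.+1%:Z + deg j * (p + m.+1%:Z)) + ((p - d) + (p - d)).
  have -> : ai_degs deg u = q + m.+1%:Z - 2 - deg j by rewrite -degu; ring.
  by rewrite degj; ring.
by rewrite sgnzD sgnz_double mulr1 mulrA.
Qed.

Lemma cyclic_coalgebra_algebra :
  ai_cyclic_coalgebra deg D G -> ai_cyclic_algebra deg D formA.
Proof.
move=> cycC xs ps y z py pz homxs homy homz.
have [b homb <-] := star_preimage_hom G_deg G_nd homy.
have [a homa <-] := star_preimage_hom G_deg G_nd homz.
rewrite (formA_mu_rcons_star xs homa homb) (formA_mu_cons_star xs homa homb).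
rewrite mulrCA; congr (_ * _); rewrite mulr_sumr; apply: eq_bigr => u _.
have [->|nz] := eqVneq (tensor_eval xs u) 0; first by rewrite !mul0r mulr0.
rewrite (tensor_eval_homAs homxs (size_tuple u) nz) mulrCA.
have := contract_first_sign u homa homb; rewrite !addrK => ->.
by rewrite (cycC _ _ _ _ _ (ltn0Sn _) homa homb u).
Qed.

Lemma cyclic_algebra_coalgebra :
  ai_cyclic_algebra deg D formA -> ai_cyclic_coalgebra deg D G.
Proof.
move=> cycA [//|m] a b p q _ homa homb u.
have := cycA _ _ _ _ _ _ (@homAs_dual k n deg u)
  (homA_star G_deg homb) (homA_star G_deg homa).
rewrite (formA_mu_rcons_star _ homa homb) (formA_mu_cons_star _ homa homb).
rewrite size_map size_tuple !sum_tensor_eval_dual big_map sumrN mulrCA.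
rewrite -/(ai_degs deg u) /= => /sgnz_mul2I cycu.
by rewrite -[RHS]/(contract_last m.+1 a b u) cycu (@contract_first_sign m u).
Qed.

End Cyclic.

Theorem lemma4p2 (k : fieldType) (n : nat) (deg : 'I_n -> int)
  (D : nat -> 'I_n -> seq 'I_n -> k) (G : 'M[k]_n) (d : int)
  (formA : ('I_n -> k) -> ('I_n -> k) -> k) :
  ai_Ainf_coalgebra deg D ->
  ai_symmetric_form deg G -> ai_form_of_degree deg G d -> ai_nondegenerate G ->
  ai_transported G formA ->
  (ai_cyclic_coalgebra deg D G <-> ai_cyclic_algebra deg D formA).
Proof.
move=> [D_deg _] G_sym G_deg G_nd formA_tr; split.
  exact: (cyclic_coalgebra_algebra D_deg G_sym G_deg G_nd formA_tr).
exact: (cyclic_algebra_coalgebra D_deg G_sym G_deg G_nd formA_tr).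
Qed.
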